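(* Let $(R,I)$ be a bounded prism, $(A,J)$ a $\delta$-pair over $(R,I)$, and $g:(A,J)\to(D,ID)$ a bounded prismatic envelope of $(A,J)$ over $(R,I)$. Let $\alpha,\beta\in A$ with $\delta(\alpha)=\alpha\beta$. Then every $\alpha$-derivation $\partial$ of $A$ over $R$ which is $\delta$-compatible with respect to $\beta$ and satisfies $\partial(J)\subset J$ extends uniquely to a $g(\alpha)$-derivation $\partial'$ of $D$ over $R$, $\delta$-compatible with respect to $g(\beta)$ (i.e. with $\partial'\circ g=g\circ\partial$).
   Context: $p$ a fixed prime; $\delta$-rings: $\delta(0)=\delta(1)=0$, $\delta(x+y)=\delta(x)+\delta(y)-\sum_{i=1}^{p-1}\frac1p\binom pi x^iy^{p-i}$, $\delta(xy)=\delta(x)y^p+x^p\delta(y)+p\delta(x)\delta(y)$, $\varphi(x)=x^p+p\delta(x)$. $\delta$-pairs: $\delta$-rings with ideals; morphisms: $\delta$-maps preserving ideals. Bounded prism: $(R,I)$ with $I$ invertible, $R$ $(pR+I)$-adically complete separated, $p\in I+\varphi(I)R$, $(R/I)[p^\infty]=(R/I)[p^N]$ for some $N$. A bounded prismatic envelope of $(A,J)$ over $(R,I)$ is a bounded prism $(D,ID)$ over $(R,I)$ with a morphism $g:(A,J)\to(D,ID)$ over $(R,I)$ through which every morphism of $\delta$-pairs $(A,J)\to(B,IB)$ over $(R,I)$ into a bounded prism factors uniquely. An $\alpha$-derivation over $R$ is an $R$-linear $\partial$ with $\partial(1)=0$, $\partial(xy)=\partial(x)y+x\partial(y)+\alpha\partial(x)\partial(y)$;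 it is $\delta$-compatible with respect to $\beta$ (with $\delta(\alpha)=\alpha\beta$) if $\partial(\delta x)=(\alpha^{p-1}+p\beta)\delta(\partial x)+\beta(\partial x)^p-\sum_{\nu=1}^{p-1}\frac1p\binom p\nu x^{p-\nu}\alpha^{\nu-1}(\partial x)^\nu$ for all $x$. *)

From HB Require Import structures.
From mathcomp Require Import all_boot all_order all_algebra.
Set Implicit Arguments. Unset Strict Implicit. Unset Printing Implicit Defensive.
Import GRing.Theory.
Local Open Scope ring_scope.

Section Defs.
Variable p : nat.

Definition binp (A : comPzRingType) (i : nat) : A := ('C(p, i) %/ p)%N%:R.

Definition is_delta (A : comPzRingType) (d : A -> A) : Prop :=
  [/\ d 0 = 0, d 1 = 0,
      (forall x y, d (x + y) =
         d x + d y - \sum_(1 <= i < p) binp A i * x ^+ i * y ^+ (p - i))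
    & (forall x y, d (x * y) =
         d x * y ^+ p + x ^+ p * d y + p%:R * d x * d y)].

Definition frob (A : comPzRingType) (d : A -> A) (x : A) : A :=
  x ^+ p + p%:R * d x.

Definition is_delta_map (A B : comPzRingType) (dA : A -> A) (dB : B -> B)
  (f : A -> B) : Prop := forall x, f (dA x) = dB (f x).

Definition is_ideal (A : comPzRingType) (J : A -> Prop) : Prop :=
  [/\ J 0, (forall x y, J x -> J y -> J (x + y))
    & (forall a x, J x -> J (a * x))].

Definition ideal_span (A : comPzRingType) (S : A -> Prop) : A -> Prop :=
  fun x => exists s : seq (A * A),
    (forall ab, ab \in s -> S ab.2) /\ x = \sum_(ab <- s) ab.1 * ab.2.

Fixpoint ideal_pow (A : comPzRingType) (K : A -> Prop) (n : nat) : A -> Prop :=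
  match n with
  | 0%N => fun _ => True
  | n'.+1 => ideal_span (fun y => exists a b, K a /\ ideal_pow K n' b /\ y = a * b)
  end.

(* A is K-adically separated and complete: A -> lim A/K^n is bijective *)
Definition adically_complete (A : comPzRingType) (K : A -> Prop) : Prop :=
  (forall x, (forall n, ideal_pow K n x) -> x = 0) /\
  (forall u : nat -> A, (forall n, ideal_pow K n (u n.+1 - u n)) ->
     exists x, forall n, ideal_pow K n (x - u n)).

(* I is an invertible ideal (defines an effective Cartier divisor): there is a
   Zariski cover by standard opens D(f_k) on which I is generated by a
   nonzerodivisor d_k, i.e. I[1/f_k] = d_k R[1/f_k] and d_k is a
   nonzerodivisor in R[1/f_k] (written without localizations). *)
Definition invertible_ideal (A : comPzRingType) (I : A -> Prop) : Prop :=
  exists fs : seq (A * A * A),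
    (* fs = list of (f_k, c_k, d_k) with sum c_k f_k = 1 *)
    \sum_(t <- fs) t.1.2 * t.1.1 = 1 /\
    forall t, t \in fs ->
      [/\ I t.2,
          (forall x, I x -> exists (m : nat) (y : A), t.1.1 ^+ m * x = y * t.2)
        & (forall y, t.2 * y = 0 -> exists m : nat, t.1.1 ^+ m * y = 0)].

Definition is_bounded_prism (A : comPzRingType) (d : A -> A) (I : A -> Prop)
  : Prop :=
  is_delta d /\ is_ideal I /\ invertible_ideal I /\
      adically_complete (ideal_span (fun y => y = p%:R \/ I y)) /\
      ideal_span (fun y => I y \/ exists i, I i /\ y = frob d i) p%:R
    /\ exists N : nat, forall x : A,
        (exists m : nat, I (p%:R ^+ m * x)) -> I (p%:R ^+ N * x).

Definition ext_ideal (R B : comPzRingType) (f : R -> B) (I : R -> Prop)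
  : B -> Prop := ideal_span (fun y => exists r, I r /\ y = f r).

Definition is_delta_pair_over (R A : comPzRingType) (dR : R -> R) (I : R -> Prop)
  (dA : A -> A) (fA : {rmorphism R -> A}) (J : A -> Prop) : Prop :=
  [/\ is_delta dA, is_ideal J, is_delta_map dR dA fA
    & forall r, I r -> J (fA r)].

Definition is_bounded_prism_over (R B : comPzRingType) (dR : R -> R)
  (I : R -> Prop) (dB : B -> B) (fB : {rmorphism R -> B}) : Prop :=
  is_bounded_prism dB (ext_ideal fB I) /\ is_delta_map dR dB fB.

Definition is_bounded_prismatic_envelope (R A D : comPzRingType)
  (dR : R -> R) (I : R -> Prop) (dA : A -> A) (fA : {rmorphism R -> A})
  (J : A -> Prop) (dD : D -> D) (fD : {rmorphism R -> D})
  (g : {rmorphism A -> D}) : Prop :=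
  [/\ is_bounded_prism_over dR I dD fD,
      is_delta_map dA dD g,
      (forall r, g (fA r) = fD r),
      (forall x, J x -> ext_ideal fD I (g x))
    & forall (B : comPzRingType) (dB : B -> B) (fB : {rmorphism R -> B})
             (h : {rmorphism A -> B}),
        is_bounded_prism_over dR I dB fB ->
        is_delta_map dA dB h ->
        (forall r, h (fA r) = fB r) ->
        (forall x, J x -> ext_ideal fB I (h x)) ->
        exists h' : {rmorphism D -> B},
          [/\ is_delta_map dD dB h', (forall r, h' (fD r) = fB r),
              (forall x, h' (g x) = h x)
            & forall h'' : {rmorphism D -> B},
                is_delta_map dD dB h'' -> (forall r, h'' (fD r) = fB r) ->
                (forall x, h'' (g x) = h x) -> forall y, h'' y = h' y]].

Definition is_alpha_derivation (R A : comPzRingType) (f : R -> A) (alpha : A)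
  (der : A -> A) : Prop :=
  [/\ (forall x y, der (x + y) = der x + der y),
      (forall r x, der (f r * x) = f r * der x),
      der 1 = 0
    & forall x y, der (x * y) = der x * y + x * der y + alpha * der x * der y].

Definition is_delta_compatible (A : comPzRingType) (d : A -> A) (alpha beta : A)
  (der : A -> A) : Prop :=
  forall x, der (d x) =
    (alpha ^+ p.-1 + p%:R * beta) * d (der x) + beta * der x ^+ p
    - \sum_(1 <= nu < p) binp A nu * x ^+ (p - nu) * alpha ^+ nu.-1 * der x ^+ nu.

End Defs.

From HB Require Import structures.
From mathcomp Require Import all_boot all_order all_algebra.
From mathcomp Require Import ring.
From mathcomp Require Import mpoly.
Set Implicit Arguments. Unset Strict Implicit. Unset Printing Implicit Defensive.
Import GRing.Theory.
Local Open Scope ring_scope.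

(* An alpha-derivation [der] of A is the same thing as a ring map
   x |-> x + eps der(x) into A[eps]/(eps^2 - alpha eps), and delta-compatibility
   with respect to beta says exactly that this map is a delta-map for the
   delta-structure on A[eps] extending delta with delta(eps) = beta eps.  So
   for D' = D[eps]/(eps^2 - g(alpha) eps) it suffices to show that D' is a
   bounded prism over (R, I): the universal property of the envelope then
   turns x |-> g(x) + eps g(der x) into a unique delta-map D -> D', whose
   eps-component is the extension (its other component is the identity, by
   uniqueness again).  That the formula for delta(x + eps y) satisfies the
   delta-ring axioms is a polynomial identity in x, y, their deltas, alpha and
   beta; it is checked in Q[X_0, ..., X_9] with the delta-structure of a
   Frobenius lift, where alpha = X_8 is a nonzerodivisor, so that D' embeds
   into D x D by eps |-> 0 and eps |-> alpha, and it is transported to every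
   ring through the inclusion Z[X] -> Q[X]. *)

Section DeltaRings.
Variable p : nat.

Definition cross_sum (S : comPzRingType) (u v : S) : S :=
  \sum_(1 <= i < p) binp p S i * u ^+ i * v ^+ (p - i).

Definition delta_add_rule (S : comPzRingType) (u v du dv : S) : S :=
  du + dv - cross_sum u v.

Definition delta_mul_rule (S : comPzRingType) (u v du dv : S) : S :=
  du * v ^+ p + u ^+ p * dv + p%:R * du * dv.

Section Morphism.
Variables (S S' : comPzRingType) (f : {rmorphism S -> S'}).

Lemma rmorph_cross_sum u v : f (cross_sum u v) = cross_sum (f u) (f v).
Proof.
rewrite rmorph_sum; apply: eq_bigr => i _.
by rewrite !rmorphM !rmorphXn /binp rmorph_nat.
Qed.

Lemma rmorph_delta_add_rule u v du dv :
  f (delta_add_rule u v du dv) = delta_add_rule (f u) (f v) (f du) (f dv).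
Proof. by rewrite !(rmorphB, rmorphD) rmorph_cross_sum. Qed.

Lemma rmorph_delta_mul_rule u v du dv :
  f (delta_mul_rule u v du dv) = delta_mul_rule (f u) (f v) (f du) (f dv).
Proof. by rewrite !(rmorphD, rmorphM, rmorphXn) rmorph_nat. Qed.

End Morphism.

Section Delta.
Variables (S : comPzRingType) (d : S -> S).
Hypothesis d_delta : is_delta p d.

Lemma delta0 : d 0 = 0. Proof. by case: d_delta. Qed.
Lemma delta1 : d 1 = 0. Proof. by case: d_delta. Qed.
Lemma deltaD u v : d (u + v) = delta_add_rule u v (d u) (d v).
Proof. by case: d_delta => _ _ -> _. Qed.
Lemma deltaM u v : d (u * v) = delta_mul_rule u v (d u) (d v).
Proof. by case: d_delta => _ _ _ ->. Qed.

End Delta.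

Lemma delta_pullback (B S : comPzRingType) (dB : B -> B) (d : S -> S)
    (f g : {rmorphism B -> S}) :
  is_delta p d -> {morph f : X / dB X >-> d X} -> {morph g : X / dB X >-> d X} ->
  (forall X, f X = 0 -> g X = 0 -> X = 0) -> is_delta p dB.
Proof.
move=> d_delta fd gd fg_inj.
have fg_eq X Y : f X = f Y -> g X = g Y -> X = Y.
  move=> fXY gXY; apply/eqP; rewrite -subr_eq0; apply/eqP.
  by apply: fg_inj; rewrite rmorphB ?fXY ?gXY subrr.
split.
- by apply: fg_eq; rewrite ?fd ?gd !rmorph0 (delta0 d_delta).
- by apply: fg_eq; rewrite ?fd ?gd !rmorph1 (delta1 d_delta) rmorph0.
- by move=> X Y; apply: fg_eq;
    rewrite ?fd ?gd rmorphD (deltaD d_delta) rmorph_delta_add_rule ?fd ?gd.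
- by move=> X Y; apply: fg_eq;
    rewrite ?fd ?gd rmorphM (deltaM d_delta) rmorph_delta_mul_rule ?fd ?gd.
Qed.

Hypothesis p_prime : prime p.

Lemma natr_cross_sum (S : comPzRingType) (x y : S) :
  p%:R * cross_sum x y = (x + y) ^+ p - x ^+ p - y ^+ p.
Proof.
have p_gt0 := prime_gt0 p_prime.
rewrite [x + y]addrC exprDn.
rewrite -(big_mkord xpredT (fun i => y ^+ (p - i) * x ^+ i *+ 'C(p, i))).
rewrite big_nat_recr //= big_ltn //= subn0 subnn bin0 binn !expr0 mulr1 mul1r mulr_sumr.
rewrite (eq_big_nat _ _ (F2 := fun i => y ^+ (p - i) * x ^+ i *+ 'C(p, i))); last first.
  move=> i /andP[i_gt0 i_ltp].
  rewrite /binp !mulrA -natrM mulnC divnK ?prime_dvd_bin ?i_gt0 //.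
  by rewrite -mulr_natl; ring.
by rewrite -!addrA addrCA !addrA addrK addrK.
Qed.

Lemma frobenius_lift_is_delta (S : comPzRingType) (phi : {rmorphism S -> S}) (ip : S) :
  p%:R * ip = 1 -> is_delta p (fun u => (phi u - u ^+ p) * ip).
Proof.
move=> p_ip; have p_gt0 := prime_gt0 p_prime.
split=> [||x y|x y].
- by rewrite rmorph0 expr0n gtn_eqF // subrr mul0r.
- by rewrite rmorph1 expr1n subrr mul0r.
- rewrite -[\sum_(1 <= i < p) _]/(cross_sum x y) -[cross_sum x y]mul1r -p_ip.
  by rewrite mulrAC natr_cross_sum rmorphD; ring.
- rewrite rmorphM exprMn.
  have -> : p%:R * ((phi x - x ^+ p) * ip) * ((phi y - y ^+ p) * ip)
          = p%:R * ip * ((phi x - x ^+ p) * (phi y - y ^+ p) * ip) by ring.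
  by rewrite p_ip; ring.
Qed.

End DeltaRings.

(* [adual a] is S[eps]/(eps^2 - a eps), the pair (x, y) standing for x + eps y. *)
Definition adual (S : comPzRingType) (a : S) : Type := (S * S)%type.

Section ADualRing.
Variables (S : comPzRingType) (a : S).
Local Notation B := (adual a).

HB.instance Definition _ := GRing.Zmodule.on B.

Definition adual_mul (X Y : B) : B :=
  (X.1 * Y.1, X.1 * Y.2 + X.2 * Y.1 + a * X.2 * Y.2).

Fact adual_mulA : associative adual_mul.
Proof. by move=> [x1 x2] [y1 y2] [z1 z2]; congr (_, _) => /=; ring. Qed.
Fact adual_mulC : commutative adual_mul.
Proof. by move=> [x1 x2] [y1 y2]; congr (_, _) => /=; ring. Qed.
Fact adual_mul1 : left_id ((1, 0) : B) adual_mul.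
Proof. by move=> [x1 x2]; congr (_, _) => /=; ring. Qed.
Fact adual_mulDl : left_distributive adual_mul +%R.
Proof. by move=> [x1 x2] [y1 y2] [z1 z2]; congr (_, _) => /=; ring. Qed.

HB.instance Definition _ :=
  GRing.Zmodule_isComPzRing.Build B adual_mulA adual_mulC adual_mul1 adual_mulDl.

Lemma adual_mulE (X Y : B) : X * Y = adual_mul X Y. Proof. by []. Qed.

Lemma adual_eq0 (X : B) : X.1 = 0 -> X.2 = 0 -> X = 0.
Proof. by case: X => x y /= -> ->. Qed.

Definition adual_fst (X : B) : S := X.1.
Definition adual_eval_a (X : B) : S := X.1 + a * X.2.
Definition adual_const (x : S) : B := (x, 0).

Fact adual_fst_is_zmod_morphism : zmod_morphism adual_fst. Proof. by []. Qed.
Fact adual_fst_is_monoid_morphism : monoid_morphism adual_fst. Proof. by []. Qed.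
HB.instance Definition _ :=
  GRing.isZmodMorphism.Build B S adual_fst adual_fst_is_zmod_morphism.
HB.instance Definition _ :=
  GRing.isMonoidMorphism.Build B S adual_fst adual_fst_is_monoid_morphism.

Fact adual_eval_a_is_zmod_morphism : zmod_morphism adual_eval_a.
Proof. by move=> [x1 x2] [y1 y2]; rewrite /adual_eval_a /=; ring. Qed.
Fact adual_eval_a_is_monoid_morphism : monoid_morphism adual_eval_a.
Proof.
by split=> [|[x1 x2] [y1 y2]]; rewrite /adual_eval_a /=; ring.
Qed.
HB.instance Definition _ :=
  GRing.isZmodMorphism.Build B S adual_eval_a adual_eval_a_is_zmod_morphism.
HB.instance Definition _ :=
  GRing.isMonoidMorphism.Build B S adual_eval_a adual_eval_a_is_monoid_morphism.

Fact adual_const_is_zmod_morphism : zmod_morphism adual_const.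
Proof. by move=> x y; congr (_, _) => /=; rewrite subrr. Qed.
Fact adual_const_is_monoid_morphism : monoid_morphism adual_const.
Proof. by split=> // x y; congr (_, _) => /=; ring. Qed.
HB.instance Definition _ :=
  GRing.isZmodMorphism.Build S B adual_const adual_const_is_zmod_morphism.
HB.instance Definition _ :=
  GRing.isMonoidMorphism.Build S B adual_const adual_const_is_monoid_morphism.

Lemma adual_constMl (c : S) (X : B) : adual_const c * X = (c * X.1, c * X.2).
Proof. by congr (_, _) => /=; ring. Qed.

Definition adual_eps : B := (0, 1).

Lemma adual_decomp (X : B) : X = adual_const X.1 + adual_eps * adual_const X.2.
Proof. by case: X => x y; congr (_, _) => /=; ring. Qed.

End ADualRing.

Section ADualMap.
Variables (S S' : comPzRingType) (a : S) (f : {rmorphism S -> S'}).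

Definition adual_map (X : adual a) : adual (f a) := (f X.1, f X.2).

Fact adual_map_is_zmod_morphism : zmod_morphism adual_map.
Proof. by move=> X Y; rewrite /adual_map !rmorphB. Qed.
Fact adual_map_is_monoid_morphism : monoid_morphism adual_map.
Proof.
by split=> [|X Y]; rewrite /adual_map /= ?rmorph1 ?rmorph0 // !(rmorphD, rmorphM).
Qed.
HB.instance Definition _ :=
  GRing.isZmodMorphism.Build (adual a) (adual (f a)) adual_map adual_map_is_zmod_morphism.
HB.instance Definition _ := GRing.isMonoidMorphism.Build (adual a) (adual (f a))
  adual_map adual_map_is_monoid_morphism.

End ADualMap.

Section ADualDelta.
Variables (p : nat) (S : comPzRingType) (a b : S).
Hypothesis p_gt0 : (0 < p)%N.
Local Notation B := (adual a).

(* The delta-structure with delta(eps) = b eps: expanding delta(x + eps y) by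
   the delta-rules and eps^k = a^(k-1) eps yields this formula. *)
Definition adual_delta_at (x y dx dy : S) : B :=
  (dx, (a ^+ p.-1 + p%:R * b) * dy + b * y ^+ p
       - \sum_(1 <= nu < p) binp p S nu * x ^+ (p - nu) * a ^+ nu.-1 * y ^+ nu).

Definition adual_delta (d : S -> S) (X : B) : B :=
  adual_delta_at X.1 X.2 (d X.1) (d X.2).

Lemma adual_fst_delta d X : adual_fst (adual_delta d X) = d (adual_fst X).
Proof. by []. Qed.

Lemma adual_delta_const d x :
  d 0 = 0 -> adual_delta d (adual_const a x) = adual_const a (d x).
Proof.
move=> d0; congr (_, _); rewrite /= d0 expr0n gtn_eqF // !mulr0 addr0.
rewrite big_nat big1 ?subr0 // => i /andP[i_gt0 _].
by rewrite expr0n gtn_eqF // mulr0.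
Qed.

Lemma mul_binp_sum x y :
  a * \sum_(1 <= nu < p) binp p S nu * x ^+ (p - nu) * a ^+ nu.-1 * y ^+ nu
  = cross_sum p x (a * y).
Proof.
rewrite mulr_sumr /cross_sum [RHS]big_nat_rev /=.
apply: eq_big_nat => i /andP[i_gt0 i_ltp].
rewrite add1n subSS subKn ?(ltnW i_ltp) // /binp bin_sub ?(ltnW i_ltp) // exprMn.
by case: i i_gt0 {i_ltp} => // i _; rewrite !exprS; ring.
Qed.

Section DeltaRing.
Variable d : S -> S.
Hypotheses (d_delta : is_delta p d) (d_a : d a = a * b).

Lemma adual_eval_a_delta X : adual_eval_a (adual_delta d X) = d (adual_eval_a X).
Proof.
case: X => x y; rewrite /adual_eval_a /adual_delta /adual_delta_at /=.
rewrite (deltaD d_delta) (deltaM d_delta) d_a /delta_add_rule /delta_mul_rule.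
have -> : a ^+ p = a * a ^+ p.-1 by rewrite -exprS prednK.
by rewrite -mul_binp_sum; ring.
Qed.

(* Where a is a nonzerodivisor, X |-> (X.1, X.1 + a X.2) embeds [adual a]
   into S x S as a delta-stable subring. *)
Lemma adual_delta_nzd_is_delta :
  (forall z, a * z = 0 -> z = 0) -> is_delta p (adual_delta d).
Proof.
move=> a_nzd.
apply: (delta_pullback d_delta (adual_fst_delta d) adual_eval_a_delta).
case=> x y; change (x = 0 -> x + a * y = 0 -> (x, y) = 0 :> B).
by move=> x0; rewrite x0 add0r => /a_nzd y0; rewrite y0.
Qed.

End DeltaRing.

(* The failures of the delta-rules for [adual_delta], every delta-value in S
   having been expanded by the delta-rules (and delta a = a b) into the free
   values [dx, dy, dx', dy']; being polynomial in their arguments, they can be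
   computed at a generic point. *)
Definition add_defect (x y x' y' dx dy dx' dy' : S) : B :=
  adual_delta_at (x + x') (y + y') (delta_add_rule p x x' dx dx')
                 (delta_add_rule p y y' dy dy')
  - adual_delta_at x y dx dy - adual_delta_at x' y' dx' dy'
  + cross_sum p ((x, y) : B) (x', y').

Definition mul_defect (x y x' y' dx dy dx' dy' : S) : B :=
  adual_delta_at (x * x') (x * y' + y * x' + a * y * y')
    (delta_mul_rule p x x' dx dx')
    (delta_add_rule p (x * y' + y * x') (a * y * y')
       (delta_add_rule p (x * y') (y * x')
          (delta_mul_rule p x y' dx dy') (delta_mul_rule p y x' dy dx'))
       (delta_mul_rule p (a * y) y' (delta_mul_rule p a y (a * b) dy) dy'))
  - delta_mul_rule p ((x, y) : B) (x', y')
      (adual_delta_at x y dx dy) (adual_delta_at x' y' dx' dy').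

Section DefectsVanish.
Variable d : S -> S.
Hypotheses (d_delta : is_delta p d) (d_a : d a = a * b).

Lemma adual_deltaD_defect (X Y : B) :
  adual_delta d (X + Y) = delta_add_rule p X Y (adual_delta d X) (adual_delta d Y)
    + add_defect X.1 X.2 Y.1 Y.2 (d X.1) (d X.2) (d Y.1) (d Y.2).
Proof.
case: X Y => [x y] [x' y'].
by rewrite /add_defect /adual_delta /= -!(deltaD d_delta) /delta_add_rule; ring.
Qed.

Lemma adual_deltaM_defect (X Y : B) :
  adual_delta d (X * Y) = delta_mul_rule p X Y (adual_delta d X) (adual_delta d Y)
    + mul_defect X.1 X.2 Y.1 Y.2 (d X.1) (d X.2) (d Y.1) (d Y.2).
Proof.
case: X Y => [x y] [x' y'].
rewrite /mul_defect /adual_delta [in LHS]adual_mulE /=.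
by rewrite !(deltaD d_delta, deltaM d_delta) d_a [RHS]addrC subrK.
Qed.

Hypothesis a_nzd : forall z, a * z = 0 -> z = 0.

Lemma add_defect_nzd (x y x' y' : S) :
  add_defect x y x' y' (d x) (d y) (d x') (d y') = 0.
Proof.
have := adual_deltaD_defect (x, y) (x', y').
rewrite (deltaD (adual_delta_nzd_is_delta d_delta d_a a_nzd)).
by move=> /esym/(canRL (addKr _)); rewrite addNr.
Qed.

Lemma mul_defect_nzd (x y x' y' : S) :
  mul_defect x y x' y' (d x) (d y) (d x') (d y') = 0.
Proof.
have := adual_deltaM_defect (x, y) (x', y').
rewrite (deltaM (adual_delta_nzd_is_delta d_delta d_a a_nzd)).
by move=> /esym/(canRL (addKr _)); rewrite addNr.
Qed.

End DefectsVanish.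
End ADualDelta.

Section ADualDeltaMap.
Variables (p : nat) (S S' : comPzRingType) (f : {rmorphism S -> S'}) (a b : S).

Lemma adual_map_delta_at x y dx dy :
  adual_map f (adual_delta_at p a b x y dx dy)
  = adual_delta_at p (f a) (f b) (f x) (f y) (f dx) (f dy).
Proof.
congr (_, _); rewrite /= !(rmorphB, rmorphD, rmorphM, rmorphXn) rmorph_nat rmorph_sum.
by congr (_ - _); apply: eq_bigr => i _; rewrite !(rmorphM, rmorphXn) /binp rmorph_nat.
Qed.

Lemma adual_map_delta (dS : S -> S) (dS' : S' -> S') :
  {morph f : x / dS x >-> dS' x} ->
  forall X : adual a,
    adual_map f (adual_delta p b dS X) = adual_delta p (f b) dS' (adual_map f X).
Proof. by move=> f_delta X; rewrite /adual_delta adual_map_delta_at !f_delta. Qed.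

Lemma adual_map_add_defect x y x' y' dx dy dx' dy' :
  adual_map f (add_defect p a b x y x' y' dx dy dx' dy')
  = add_defect p (f a) (f b) (f x) (f y) (f x') (f y') (f dx) (f dy) (f dx') (f dy').
Proof.
rewrite /add_defect !(rmorphD, rmorphN) /= !adual_map_delta_at rmorph_cross_sum.
by rewrite !rmorph_delta_add_rule !rmorphD.
Qed.

Lemma adual_map_mul_defect x y x' y' dx dy dx' dy' :
  adual_map f (mul_defect p a b x y x' y' dx dy dx' dy')
  = mul_defect p (f a) (f b) (f x) (f y) (f x') (f y') (f dx) (f dy) (f dx') (f dy').
Proof.
rewrite /mul_defect rmorphB /= rmorph_delta_mul_rule /= !adual_map_delta_at.
by rewrite !(rmorph_delta_add_rule, rmorph_delta_mul_rule, rmorphD, rmorphM).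
Qed.

End ADualDeltaMap.

(* [mmap] evaluates polynomials only in nontrivial rings. *)
Definition nonzero_copy (S : comPzRingType) of (1 : S) != 0 : Type := S.

Section NonzeroCopy.
Variables (S : comPzRingType) (S_nz : (1 : S) != 0).
Local Notation T := (nonzero_copy S_nz).

HB.instance Definition _ := GRing.ComPzRing.on T.
HB.instance Definition _ := GRing.PzSemiRing_isNonZero.Build T S_nz.

Definition of_nonzero_copy (x : T) : S := x.
Fact of_nonzero_copy_is_zmod_morphism : zmod_morphism of_nonzero_copy.
Proof. by []. Qed.
Fact of_nonzero_copy_is_monoid_morphism : monoid_morphism of_nonzero_copy.
Proof. by []. Qed.
HB.instance Definition _ := GRing.isZmodMorphism.Build T S
  of_nonzero_copy of_nonzero_copy_is_zmod_morphism.
HB.instance Definition _ := GRing.isMonoidMorphism.Build T S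
  of_nonzero_copy of_nonzero_copy_is_monoid_morphism.

End NonzeroCopy.

Section GenericPoint.
Variable n : nat.
Variable E : forall S : comPzRingType, ('I_n -> S) -> S.
Hypothesis E_natural : forall (S S' : comPzRingType) (f : {rmorphism S -> S'})
  (v : 'I_n -> S) (w : 'I_n -> S'), (forall i, f (v i) = w i) -> f (E v) = E w.

(* Z[X] embeds in Q[X], and every point of every ring is an image of the
   generic point of Z[X]. *)
Lemma natural_identity :
  E (fun i => 'X_i : {mpoly rat[n]}) = 0 ->
  forall (S : comPzRingType) (v : 'I_n -> S), E v = 0.
Proof.
move=> E_rat.
have E_int : E (fun i => 'X_i : {mpoly int[n]}) = 0.
  have intr_X (i : 'I_n) : map_mpoly (intr : int -> rat) 'X_i = 'X_i.
    exact: map_mpolyX.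
  have := E_natural intr_X.
  rewrite E_rat => E_int; apply/mpolyP => m; move/(congr1 (mcoeff m)): E_int.
  by rewrite mcoeff_map_mpoly !mcoeff0 => /eqP; rewrite intr_eq0 => /eqP.
move=> S v; have [S_trivial | S_nz] := eqVneq (1 : S) 0.
  by rewrite -[E v]mulr1 S_trivial mulr0.
pose ev := @of_nonzero_copy S S_nz \o mmap (intr : int -> nonzero_copy S_nz) v.
have ev_X i : ev 'X_i = v i by rewrite /ev /= mmapX mmap1U.
by rewrite -(E_natural ev_X) E_int rmorph0.
Qed.

End GenericPoint.

Section DeltaIdentity.
Variable p : nat.
Hypothesis p_prime : prime p.
Variable F :
  forall S : comPzRingType, S -> S -> S -> S -> S -> S -> S -> S -> S -> S -> S * S.
Hypothesis F_natural : forall (S S' : comPzRingType) (f : {rmorphism S -> S'})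
  (a b x y x' y' dx dy dx' dy' : S),
  (f (F a b x y x' y' dx dy dx' dy').1, f (F a b x y x' y' dx dy dx' dy').2)
  = F (f a) (f b) (f x) (f y) (f x') (f y') (f dx) (f dy) (f dx') (f dy').
Hypothesis F_delta_nzd : forall (S : comPzRingType) (d : S -> S) (a b x y x' y' : S),
  is_delta p d -> d a = a * b -> (forall z, a * z = 0 -> z = 0) ->
  F a b x y x' y' (d x) (d y) (d x') (d y') = 0.

Local Notation Q := {mpoly rat[10]}.

(* X_0, ..., X_9 stand for x, y, x', y', dx, dy, dx', dy', a, b. *)
Let at_point (S : comPzRingType) (v : 'I_10 -> S) :=
  F (v (inord 8)) (v (inord 9)) (v (inord 0)) (v (inord 1)) (v (inord 2))
    (v (inord 3)) (v (inord 4)) (v (inord 5)) (v (inord 6)) (v (inord 7)).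

(* The Frobenius lift X_i |-> X_i^p + p t_i of Q[X], with t the list below,
   makes X_4, ..., X_7 the deltas of X_0, ..., X_3 and gives
   delta X_8 = X_8 X_9. *)
Let generic_delta_values : seq Q :=
  [:: 'X_(inord 4); 'X_(inord 5); 'X_(inord 6); 'X_(inord 7); 0; 0; 0; 0;
      'X_(inord 8) * 'X_(inord 9); 0].

Let generic_frobenius : {rmorphism Q -> Q} :=
  mmap (@mpolyC 10 rat) (fun i => 'X_i ^+ p + p%:R * nth 0 generic_delta_values i).

Let generic_delta (u : Q) : Q :=
  (generic_frobenius u - u ^+ p) * (p%:R^-1 : rat)%:MP.

Lemma at_generic_point : at_point (fun i => 'X_i : Q) = 0.
Proof.
have p_inv : p%:R * (p%:R^-1 : rat)%:MP = 1 :> Q.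
  rewrite -mpolyC_nat -rmorphM mulfV ?rmorph1 //.
  by rewrite Num.Theory.pnatr_eq0 -lt0n prime_gt0.
have delta_X k : (k < 10)%N ->
  generic_delta 'X_(inord k) = nth 0 generic_delta_values k.
  move=> k_lt10; rewrite /generic_delta /= mmapX mmap1U inordK //.
  by rewrite addrAC subrr add0r mulrAC p_inv mul1r.
rewrite /at_point -[X in F _ _ _ _ _ _ X](delta_X 0%N) //.
rewrite -[X in F _ _ _ _ _ _ _ X](delta_X 1%N) //.
rewrite -[X in F _ _ _ _ _ _ _ _ X](delta_X 2%N) //.
rewrite -[X in F _ _ _ _ _ _ _ _ _ X](delta_X 3%N) //.
apply: F_delta_nzd.
- exact: frobenius_lift_is_delta p_inv.
- by rewrite delta_X.
- move=> z /eqP; rewrite mulf_eq0 => /orP[/eqP X8_0 | /eqP //].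
  have := congr1 (mcoeff U_(inord 8)) X8_0.
  by rewrite mcoeffX eqxx mcoeff0 => /eqP; rewrite oner_eq0.
Qed.

Lemma delta_identity (S : comPzRingType) (a b x y x' y' dx dy dx' dy' : S) :
  F a b x y x' y' dx dy dx' dy' = 0.
Proof.
pose v (i : 'I_10) := nth 0 [:: x; y; x'; y'; dx; dy; dx'; dy'; a; b] i.
have -> : F a b x y x' y' dx dy dx' dy' = at_point v by rewrite /at_point /v !inordK.
have natural (T T' : comPzRingType) (f : {rmorphism T -> T'})
    (v1 : 'I_10 -> T) (w : 'I_10 -> T') : (forall i, f (v1 i) = w i) ->
  (f (at_point v1).1, f (at_point v1).2) = at_point w.
  by move=> fvw; rewrite F_natural !fvw.
rewrite [at_point v]surjective_pairing.
rewrite (natural_identity (E := fun T v => (at_point v).1)) ?at_generic_point //;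
  last by move=> T T' f v1 w /natural/(congr1 fst).
rewrite (natural_identity (E := fun T v => (at_point v).2)) ?at_generic_point //.
by move=> T T' f v1 w /natural/(congr1 snd).
Qed.

End DeltaIdentity.

Lemma adual_delta_is_delta (p : nat) (S : comPzRingType) (d : S -> S) (a b : S) :
  prime p -> is_delta p d -> d a = a * b -> is_delta p (@adual_delta p S a b d).
Proof.
move=> p_prime d_delta d_a; have p_gt0 := prime_gt0 p_prime.
have const_delta x : adual_delta p b d (adual_const a x) = adual_const a (d x).
  exact: adual_delta_const (delta0 d_delta).
split.
- by rewrite -(rmorph0 (adual_const a)) const_delta (delta0 d_delta) rmorph0.
- by rewrite -(rmorph1 (adual_const a)) const_delta (delta1 d_delta) rmorph0.
- move=> X Y; rewrite adual_deltaD_defect // (delta_identity p_prime) ?addr0 //.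
    exact: adual_map_add_defect.
  by move=> T dT aT bT *; apply: add_defect_nzd.
- move=> X Y; rewrite adual_deltaM_defect // (delta_identity p_prime) ?addr0 //.
    exact: adual_map_mul_defect.
  by move=> T dT aT bT *; apply: mul_defect_nzd.
Qed.

Section Ideals.
Variable A : comPzRingType.
Implicit Types (S K : A -> Prop).

Lemma ideal0 K : is_ideal K -> K 0. Proof. by case. Qed.
Lemma idealD K x y : is_ideal K -> K x -> K y -> K (x + y).
Proof. by case=> _ + _; apply. Qed.
Lemma idealMl K c x : is_ideal K -> K x -> K (c * x).
Proof. by case=> _ _; apply. Qed.

Lemma ideal_span_is_ideal S : is_ideal (ideal_span S).
Proof.
split.
- by exists [::]; rewrite big_nil.
- move=> _ _ [s [sS ->]] [t [tS ->]]; exists (s ++ t); rewrite big_cat.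
  by split=> // ab; rewrite mem_cat => /orP[/sS|/tS].
- move=> c _ [s [sS ->]]; exists [seq (c * ab.1, ab.2) | ab <- s]; split.
    by move=> _ /mapP[ab /sS ? ->].
  by rewrite big_map mulr_sumr; apply: eq_bigr => ab _; rewrite mulrA.
Qed.

Lemma ideal_span_gen S x : S x -> ideal_span S x.
Proof.
move=> Sx; exists [:: (1, x)]; rewrite big_seq1 mul1r.
by split=> // ab; rewrite inE => /eqP ->.
Qed.

Lemma ideal_span_min S K x :
  is_ideal K -> (forall y, S y -> K y) -> ideal_span S x -> K x.
Proof.
move=> K_ideal SK [s [sS ->]]; elim: s sS => [|ab s IHs] sS.
  by rewrite big_nil; apply: ideal0.
rewrite big_cons; apply: idealD => //.
  by apply: idealMl => //; apply/SK/sS; rewrite inE eqxx.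
by apply: IHs => ab' ab's; apply: sS; rewrite inE ab's orbT.
Qed.

Lemma ideal_pow_is_ideal K n : is_ideal (ideal_pow K n).
Proof. by case: n => [|n] /=; [split | apply: ideal_span_is_ideal]. Qed.

End Ideals.

Lemma ideal_span_rmorph (A B : comPzRingType) (h : {rmorphism A -> B})
    (SA : A -> Prop) (SB : B -> Prop) :
  (forall x, SA x -> ideal_span SB (h x)) ->
  forall x, ideal_span SA x -> ideal_span SB (h x).
Proof.
move=> SA_SB x; apply: ideal_span_min SA_SB => //.
have SB_ideal := ideal_span_is_ideal SB.
split=> [|u v Su Sv|c u Su]; rewrite ?rmorph0 ?rmorphD ?rmorphM.
- exact: ideal0.
- exact: idealD.
- exact: idealMl.
Qed.

Section ADualIdeals.
Variables (D : comPzRingType) (a : D).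
Local Notation B := (adual a).

Definition adual_ideal (K : D -> Prop) (X : B) : Prop := K X.1 /\ K X.2.

Lemma adual_ideal_is_ideal K : is_ideal K -> is_ideal (adual_ideal K).
Proof.
move=> K_ideal; split.
- by split; apply: ideal0.
- by move=> X Y [KX1 KX2] [KY1 KY2]; split; apply: (idealD K_ideal).
move=> [c1 c2] [x1 x2] [Kx1 Kx2]; split; first exact: (idealMl _ K_ideal).
rewrite /= -!addrA; apply: (idealD K_ideal); last apply: (idealD K_ideal).
all: exact: (idealMl _ K_ideal).
Qed.

Lemma adual_ideal_const K x : is_ideal K -> K x -> adual_ideal K (adual_const a x).
Proof. by move=> K_ideal Kx; split=> //; apply: ideal0. Qed.

Lemma ideal_span_adual (SD : D -> Prop) (SB : B -> Prop) :
    (forall X, SB X -> adual_ideal (ideal_span SD) X) ->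
    (forall x, SD x -> ideal_span SB (adual_const a x)) ->
  forall X, ideal_span SB X <-> adual_ideal (ideal_span SD) X.
Proof.
move=> SB_SD SD_SB X; split.
  apply: ideal_span_min SB_SD.
  exact/adual_ideal_is_ideal/ideal_span_is_ideal.
case=> SX1 SX2; rewrite (adual_decomp X).
have SB_ideal := ideal_span_is_ideal SB.
apply: idealD => //; last apply: idealMl => //.
  exact: (ideal_span_rmorph SD_SB).
exact: (ideal_span_rmorph SD_SB).
Qed.

Lemma ideal_pow_adual (K : D -> Prop) (K' : B -> Prop) :
    is_ideal K -> (forall X, K' X <-> adual_ideal K X) ->
  forall n X, ideal_pow K' n X <-> adual_ideal (ideal_pow K n) X.
Proof.
move=> K_ideal K'E; elim=> [//|n IHn] X; apply: ideal_span_adual.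
- move=> _ [U [V [/K'E [KU1 KU2] [/IHn [KV1 KV2] ->]]]].
  have pow_ideal := ideal_span_is_ideal
    (fun y => exists u v, K u /\ ideal_pow K n v /\ y = u * v).
  split; first by apply: ideal_span_gen; exists U.1, V.1.
  apply: idealD => //; first apply: idealD => //.
  + by apply: ideal_span_gen; exists U.1, V.2.
  + by apply: ideal_span_gen; exists U.2, V.1; rewrite mulrC.
  + apply: ideal_span_gen; exists (a * U.2), V.2; split=> //.
    exact: idealMl.
- move=> _ [u [v [Ku [Kv ->]]]]; apply: ideal_span_gen.
  exists (adual_const a u), (adual_const a v); rewrite rmorphM; split.
    by apply/K'E; apply: adual_ideal_const.
  by split=> //; apply/IHn; split=> //; apply: ideal0 (ideal_pow_is_ideal _ _).
Qed.

Lemma adual_adically_complete (K : D -> Prop) (K' : B -> Prop) :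
    is_ideal K -> (forall X, K' X <-> adual_ideal K X) ->
  adically_complete K -> adically_complete K'.
Proof.
move=> K_ideal K'E [K_sep K_complete]; have powE := ideal_pow_adual K_ideal K'E.
split=> [X X_lim | u u_cauchy].
  have /(_ _)/powE X_lim' := X_lim.
  by apply: adual_eq0; apply: K_sep => n; have [] := X_lim' n.
have /(_ _)/powE u_cauchy' := u_cauchy.
have [x1 x1_lim] := K_complete (fun n => (u n).1) (fun n => (u_cauchy' n).1).
have [x2 x2_lim] := K_complete (fun n => (u n).2) (fun n => (u_cauchy' n).2).
by exists (x1, x2) => n; apply/powE; split; [apply: x1_lim | apply: x2_lim].
Qed.

Lemma adual_invertible_ideal (K : D -> Prop) (K' : B -> Prop) :
    is_ideal K -> (forall X, K' X <-> adual_ideal K X) ->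
  invertible_ideal K -> invertible_ideal K'.
Proof.
move=> K_ideal K'E [fs [fs_cover fs_local]].
pose const3 (t : D * D * D) :=
  (adual_const a t.1.1, adual_const a t.1.2, adual_const a t.2).
exists (map const3 fs); split.
  by rewrite big_map -(rmorph1 (adual_const a)) -fs_cover rmorph_sum;
    apply: eq_bigr => t _; rewrite rmorphM.
move=> _ /mapP[[[f c] g] /fs_local [Kg K_local g_nzd] ->] /=.
split.
- by apply/K'E; apply: adual_ideal_const.
- move=> X /K'E [/K_local [m1 [y1 e1]] /K_local [m2 [y2 e2]]].
  exists (m1 + m2)%N, (f ^+ m2 * y1, f ^+ m1 * y2).
  rewrite -rmorphXn adual_constMl [RHS]mulrC adual_constMl exprD /=.
  congr (_, _); first by rewrite [_ ^+ m1 * _]mulrC -mulrA e1 /=; ring.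
  by rewrite -mulrA e2 /=; ring.
- move=> Y; rewrite adual_constMl => gY0.
  have [m1 e1] := g_nzd _ (congr1 fst gY0); have [m2 e2] := g_nzd _ (congr1 snd gY0).
  exists (m1 + m2)%N; rewrite -rmorphXn adual_constMl exprD.
  by rewrite mulrAC e1 mul0r -mulrA e2 mulr0.
Qed.

Lemma adual_bounded_torsion (K : D -> Prop) (K' : B -> Prop) (c : D) (N : nat) :
    (forall X, K' X <-> adual_ideal K X) ->
    (forall x, (exists m : nat, K (c ^+ m * x)) -> K (c ^+ N * x)) ->
  forall X, (exists m : nat, K' (adual_const a c ^+ m * X)) ->
    K' (adual_const a c ^+ N * X).
Proof.
move=> K'E K_torsion X [m]; rewrite -!rmorphXn => /K'E.
rewrite adual_constMl => -[K1 K2]; apply/K'E; rewrite adual_constMl.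
by split; apply: K_torsion; exists m.
Qed.

End ADualIdeals.

Section ADualPrism.
Variables (p : nat) (R D : comPzRingType) (dR : R -> R) (I : R -> Prop).
Variables (dD : D -> D) (fD : {rmorphism R -> D}) (a b : D).
Hypotheses (p_prime : prime p) (D_prism : is_bounded_prism_over p dR I dD fD).
Hypothesis dD_a : dD a = a * b.
Local Notation B := (adual a).
Local Notation dB := (adual_delta p b dD).
Local Notation ID := (ext_ideal fD I).
Local Notation IB := (ext_ideal (adual_const a \o fD) I).

Let dD_delta : is_delta p dD. Proof. by case: D_prism => -[]. Qed.

Lemma adual_delta_constE x : dB (adual_const a x) = adual_const a (dD x).
Proof. exact (adual_delta_const a b (prime_gt0 p_prime) x (delta0 dD_delta)). Qed.

Lemma ext_ideal_adual X : IB X <-> adual_ideal ID X.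
Proof.
apply: ideal_span_adual => [Y [r [Ir ->]] | y [r [Ir ->]]].
  apply: adual_ideal_const; first exact: ideal_span_is_ideal.
  by apply: ideal_span_gen; exists r.
by apply: ideal_span_gen; exists r.
Qed.

Lemma adic_ideal_adual X :
  ideal_span (fun y => y = p%:R \/ IB y) X
  <-> adual_ideal (ideal_span (fun y => y = p%:R \/ ID y)) X.
Proof.
have span_ideal := ideal_span_is_ideal (fun y => y = p%:R \/ ID y).
apply: ideal_span_adual => [Y [-> | /ext_ideal_adual [I1 I2]] | y [-> | Iy]].
- rewrite -(rmorph_nat (adual_const a)); apply: adual_ideal_const => //.
  by apply: ideal_span_gen; left.
- by split; apply: ideal_span_gen; right.
- by apply: ideal_span_gen; left; rewrite rmorph_nat.
apply: ideal_span_gen; right; apply/ext_ideal_adual.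
exact: adual_ideal_const (ideal_span_is_ideal _) Iy.
Qed.

Lemma adual_prime_in_ideal_frob :
  ideal_span (fun y => ID y \/ exists i, ID i /\ y = frob p dD i) p%:R ->
  ideal_span (fun y => IB y \/ exists i, IB i /\ y = frob p dB i) p%:R.
Proof.
rewrite -(rmorph_nat (adual_const a)); apply: ideal_span_rmorph => y.
have IB_const x : ID x -> IB (adual_const a x).
  move=> Ix; apply/ext_ideal_adual.
  exact: adual_ideal_const (ideal_span_is_ideal _) Ix.
case=> [Iy | [i [Ii ->]]]; apply: ideal_span_gen; first by left; apply: IB_const.
right; exists (adual_const a i); split; first exact: IB_const.
by rewrite /frob rmorphD rmorphM rmorphXn rmorph_nat adual_delta_constE.
Qed.

Lemma adual_bounded_prism_over : is_bounded_prism_over p dR I dB (adual_const a \o fD).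
Proof.
have [[_ [I_ideal [I_inv [I_complete [p_frob [N I_torsion]]]]]] fD_delta] := D_prism.
have ID_ideal : is_ideal ID by apply: ideal_span_is_ideal.
split; last by move=> r /=; rewrite fD_delta adual_delta_constE.
split; first exact: adual_delta_is_delta.
split; first exact: ideal_span_is_ideal.
split; first exact: adual_invertible_ideal ext_ideal_adual I_inv.
split.
  apply: adual_adically_complete adic_ideal_adual I_complete.
  exact: ideal_span_is_ideal.
split; first exact: adual_prime_in_ideal_frob.
exists N; rewrite -(rmorph_nat (adual_const a)).
exact: adual_bounded_torsion ext_ideal_adual I_torsion.
Qed.

End ADualPrism.

Lemma prismatic_envelope_endo_id (p : nat) (R A D : comPzRingType) (dR : R -> R)
    (I : R -> Prop) (dA : A -> A) (fA : {rmorphism R -> A}) (J : A -> Prop)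
    (dD : D -> D) (fD : {rmorphism R -> D}) (g : {rmorphism A -> D})
    (e : {rmorphism D -> D}) :
  is_bounded_prismatic_envelope p dR I dA fA J dD fD g ->
  is_delta_map dD dD e -> (forall r, e (fD r) = fD r) -> (forall x, e (g x) = g x) ->
  forall y, e y = y.
Proof.
move=> [D_prism g_delta g_f g_J g_univ] e_delta e_f e_g y.
have [h [_ _ _ h_uniq]] := g_univ _ _ _ _ D_prism g_delta g_f g_J.
by rewrite (h_uniq e) // -(h_uniq idfun).
Qed.

Section DerivationMorphism.
Variables (R A : comPzRingType) (fA : R -> A) (alpha : A) (der : A -> A).
Hypothesis der_derivation : is_alpha_derivation fA alpha der.

Lemma derivationD x y : der (x + y) = der x + der y. Proof. by case: der_derivation. Qed.
Lemma derivationB x y : der (x - y) = der x - der y.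
Proof. by apply: (addIr (der y)); rewrite -derivationD !subrK. Qed.
Lemma derivation1 : der 1 = 0. Proof. by case: der_derivation. Qed.
Lemma derivationM x y : der (x * y) = der x * y + x * der y + alpha * der x * der y.
Proof. by case: der_derivation. Qed.
Lemma derivation_scalar r : der (fA r) = 0.
Proof.
by case: der_derivation => _ der_fA _ _; rewrite -[fA r]mulr1 der_fA derivation1 mulr0.
Qed.

(* The proof argument is there only so that the canonical ring-morphism
   structure below can be found from the term. *)
Definition der_rmorph of is_alpha_derivation fA alpha der : A -> adual alpha :=
  fun x => (x, der x).

Fact der_rmorph_is_zmod_morphism : zmod_morphism (der_rmorph der_derivation).
Proof. by move=> x y; congr (_, _); rewrite /= derivationB. Qed.
Fact der_rmorph_is_monoid_morphism : monoid_morphism (der_rmorph der_derivation).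
Proof.
split=> [|x y]; first by congr (_, _); rewrite /= derivation1.
by congr (_, _); rewrite /= derivationM; ring.
Qed.
HB.instance Definition _ := GRing.isZmodMorphism.Build A (adual alpha)
  (der_rmorph der_derivation) der_rmorph_is_zmod_morphism.
HB.instance Definition _ := GRing.isMonoidMorphism.Build A (adual alpha)
  (der_rmorph der_derivation) der_rmorph_is_monoid_morphism.

Lemma der_rmorph_scalar r : der_rmorph der_derivation (fA r) = adual_const alpha (fA r).
Proof. by congr (_, _); rewrite /= derivation_scalar. Qed.

Lemma der_rmorph_delta (p : nat) (dA : A -> A) (beta : A) :
  is_delta_compatible p dA alpha beta der ->
  is_delta_map dA (adual_delta p beta dA) (der_rmorph der_derivation).
Proof. by move=> der_delta x; congr (_, _); rewrite /= der_delta. Qed.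

Lemma adual_map_der_rmorph_delta (p : nat) (dA : A -> A) (beta : A)
    (D : comPzRingType) (dD : D -> D) (g : {rmorphism A -> D}) :
  is_delta_compatible p dA alpha beta der -> is_delta_map dA dD g ->
  is_delta_map dA (adual_delta p (g beta) dD) (adual_map g \o der_rmorph der_derivation).
Proof.
move=> der_delta g_delta x; rewrite -[RHS](adual_map_delta p beta g_delta).
exact: (congr1 (adual_map g) (der_rmorph_delta der_delta x)).
Qed.

End DerivationMorphism.

Section ADualSplitting.
Variables (R D : comPzRingType) (fD : {rmorphism R -> D}) (a : D).
Variable h : {rmorphism D -> adual a}.
Hypothesis h_fst : forall y, (h y).1 = y.
Hypothesis h_f : forall r, h (fD r) = adual_const a (fD r).

Lemma adual_snd_derivation : is_alpha_derivation fD a (fun y => (h y).2).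
Proof.
split=> [x y | r x | | x y]; rewrite ?rmorphD ?rmorphM ?rmorph1 //.
- by rewrite h_f adual_constMl.
- by rewrite adual_mulE /= !h_fst; ring.
Qed.

Lemma adual_snd_delta_compatible (p : nat) (dD : D -> D) (b : D) :
  is_delta_map dD (adual_delta p b dD) h ->
  is_delta_compatible p dD a b (fun y => (h y).2).
Proof. by move=> h_delta y; rewrite h_delta /= !h_fst. Qed.

End ADualSplitting.

Theorem proposition6p15 (p : nat) (hp : prime p)
  (R A D : comPzRingType) (dR : R -> R) (I : R -> Prop)
  (dA : A -> A) (fA : {rmorphism R -> A}) (J : A -> Prop)
  (dD : D -> D) (fD : {rmorphism R -> D}) (g : {rmorphism A -> D}) :
  is_bounded_prism p dR I ->
  is_delta_pair_over p dR I dA fA J ->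
  is_bounded_prismatic_envelope p dR I dA fA J dD fD g ->
  forall alpha beta : A, dA alpha = alpha * beta ->
  forall der : A -> A,
    is_alpha_derivation fA alpha der ->
    is_delta_compatible p dA alpha beta der ->
    (forall x, J x -> J (der x)) ->
    exists der' : D -> D,
      [/\ is_alpha_derivation fD (g alpha) der',
          is_delta_compatible p dD (g alpha) (g beta) der',
          (forall x, der' (g x) = g (der x))
        & forall der'' : D -> D,
            is_alpha_derivation fD (g alpha) der'' ->
            is_delta_compatible p dD (g alpha) (g beta) der'' ->
            (forall x, der'' (g x) = g (der x)) ->
            forall y, der'' y = der' y].
Proof.
move=> _ _ envelope alpha beta dA_alpha der der_derivation der_delta der_J.
have [D_prism g_delta g_f g_J g_univ] := envelope.
have dD_a : dD (g alpha) = g alpha * g beta by rewrite -g_delta dA_alpha rmorphM.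
pose h := adual_map g \o der_rmorph der_derivation.
have h_delta := adual_map_der_rmorph_delta der_derivation der_delta g_delta.
have h_f r : h (fA r) = (adual_const (g alpha) \o fD) r.
  change ((g (fA r), g (der (fA r))) = (fD r, 0) :> adual (g alpha)).
  by rewrite (derivation_scalar der_derivation) rmorph0 g_f.
have h_J x : J x -> ext_ideal (adual_const (g alpha) \o fD) I (h x).
  by move=> Jx; apply/ext_ideal_adual; split; apply: g_J => //; apply: der_J.
have [h' [h'_delta h'_f h'_g h'_uniq]] :=
  g_univ _ _ _ h (adual_bounded_prism_over hp D_prism dD_a) h_delta h_f h_J.
have h'_fst y : (h' y).1 = y.
  apply: (prismatic_envelope_endo_id (e := @adual_fst _ (g alpha) \o h') envelope).
  - by move=> z /=; rewrite h'_delta.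
  - by move=> r /=; rewrite h'_f.
  - by move=> x /=; rewrite h'_g.
exists (fun y => (h' y).2); split.
- exact: adual_snd_derivation.
- exact: adual_snd_delta_compatible.
- by move=> x; rewrite h'_g.
move=> der'' der''_derivation der''_delta der''_g y.
rewrite -(h'_uniq (der_rmorph der''_derivation)) //.
- exact: der_rmorph_delta.
- exact: der_rmorph_scalar.
- by move=> x; congr (_, _); rewrite /= der''_g.
Qed.
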